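(* Let $N_1,N_2\in\mathbb{N}$ and suppose $(|p_1\rangle,|q_1\rangle)\in\mathcal{S}_{N_1}$ and $(|p_2\rangle,|q_2\rangle)\in\mathcal{S}_{N_2}$ generate extremal rays. Then $(|p_1\rangle\otimes|p_2\rangle,|q_1\rangle\otimes|q_2\rangle)\in\mathcal{S}_{N_1+N_2}$ and it generates an extremal ray of $\mathcal{S}_{N_1+N_2}$.
   Context: $K=\frac12\begin{pmatrix}-1&1&1&1\\1&-1&1&1\\1&1&-1&1\\1&1&1&-1\end{pmatrix}$. For $N\in\mathbb{N}$, $\mathcal{S}_N=\{(|p\rangle,|q\rangle)\in(\mathbb{R}^4)^{\otimes N}\oplus(\mathbb{R}^4)^{\otimes N}: |p\rangle,|q\rangle\text{ entrywise nonnegative},\ K^{\otimes N}|p\rangle=|q\rangle\}$, a polyhedral cone (the cone of Pauli PPT spectra). *)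

From HB Require Import structures.
From mathcomp Require Import all_boot all_order all_algebra.
Set Implicit Arguments. Unset Strict Implicit. Unset Printing Implicit Defensive.
Import Order.TTheory GRing.Theory Num.Theory.
Local Open Scope ring_scope.

(* Basis index set of (R^4)^{\otimes N}: multi-indices i = (i_1,...,i_N), i_k in {0,1,2,3}. *)
Definition idx (N : nat) : finType := {ffun 'I_N -> 'I_4}.

Notation vec R N := {ffun idx N -> R}.

Definition Kmx (R : realFieldType) : 'M[R]_4 :=
  \matrix_(a < 4, b < 4) (if a == b then - 2^-1 else 2^-1).

Definition Kpow (R : realFieldType) (N : nat) (p : vec R N) : vec R N :=
  [ffun i : idx N => \sum_(j : idx N) (\prod_(k < N) Kmx R (i k) (j k)) * p j].

Definition nonneg (R : realFieldType) (N : nat) (p : vec R N) : Prop :=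
  forall i, 0 <= p i.

Definition S_cone (R : realFieldType) (N : nat) (x : vec R N * vec R N) : Prop :=
  nonneg x.1 /\ nonneg x.2 /\ Kpow x.1 = x.2.

Definition tens (R : realFieldType) (N1 N2 : nat) (p1 : vec R N1) (p2 : vec R N2)
  : vec R (N1 + N2) :=
  [ffun i : idx (N1 + N2) =>
     p1 [ffun k : 'I_N1 => i (lshift N2 k)] * p2 [ffun k : 'I_N2 => i (rshift N1 k)]].

Definition extremal_ray (R : realFieldType) (N : nat) (C : vec R N * vec R N -> Prop)
  (x : vec R N * vec R N) : Prop :=
  [/\ C x, exists i, x.1 i != 0 \/ x.2 i != 0 &
      forall y z, C y -> C z -> (forall i, x.1 i = y.1 i + z.1 i /\ x.2 i = y.2 i + z.2 i) ->
        exists a : R, forall i, y.1 i = a * x.1 i /\ y.2 i = a * x.2 i].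

From HB Require Import structures.
From mathcomp Require Import all_boot all_order all_algebra.
From mathcomp Require Import ring lra.
Set Implicit Arguments. Unset Strict Implicit. Unset Printing Implicit Defensive.
Import Order.TTheory GRing.Theory Num.Theory.
Local Open Scope ring_scope.

(* Three facts carry the argument.
   (1) K^2 = I, hence K^{(x)N} is a linear involution; in particular it is
       injective, and for (p, q) in S_N, p = 0 iff q = 0.
   (2) Face lemma: if (p, q) spans an extremal ray of S_N and u is a vector
       vanishing wherever p does, with K^{(x)N} u vanishing wherever q does
       ("u is dominated by (p, q)"), then u is a multiple of p.  Indeed
       (p, q) +- t (u, K^{(x)N} u) stays in the cone for small t > 0.
   (3) Splitting an index of (R^4)^{(x)(N1+N2)} as a pair (c, d), the
       operator K^{(x)(N1+N2)} is the product of the operators acting on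
       each factor, so K^{(x)(N1+N2)} (p1 (x) p2) = K p1 (x) K p2.
   For the theorem, a summand y of a decomposition of x = (p1(x)p2, q1(x)q2)
   is dominated by x.  Each slice c |-> y(c, d) is then dominated by
   (p1, q1), hence a multiple of p1 by (2); so y = p1 (x) v, and v is
   dominated by (p2, q2), hence a multiple of p2 by (2) again. *)

Section PauliCone.
Variable R : realFieldType.

Definition Kp (N : nat) (i j : idx N) : R := \prod_(k < N) Kmx R (i k) (j k).

Lemma KpowE N (p : vec R N) i : Kpow p i = \sum_j Kp i j * p j.
Proof. by rewrite ffunE. Qed.

Lemma Kmx_invol (a c : 'I_4) : \sum_(b < 4) Kmx R a b * Kmx R b c = (a == c)%:R.
Proof.
rewrite !big_ord_recr big_ord0 /= !mxE.
have h2 : (2 : R) != 0 by rewrite pnatr_eq0.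
case: a => [[|[|[|[|a]]]] Ha] //; case: c => [[|[|[|[|c]]]] Hc] //=;
  rewrite /= ?eqxx; try field; done.
Qed.

Lemma Kp_invol N (i l : idx N) : \sum_j Kp i j * Kp j l = (i == l)%:R.
Proof.
rewrite /Kp; under eq_bigr do rewrite -big_split /=.
rewrite -(bigA_distr_bigA (fun k b => Kmx R (i k) b * Kmx R b (l k))) /=.
under eq_bigr do rewrite Kmx_invol.
have [->|neq] := eqVneq i l; first by rewrite big1 // => k _; rewrite eqxx.
have /existsP[k hk] : [exists k, i k != l k].
  apply: contraNT neq; rewrite negb_exists => /forallP H.
  by apply/eqP/ffunP => k; apply/eqP; rewrite -[_ == _]negbK; exact: H k.
by rewrite (bigD1 k) //= (negbTE hk) mul0r.
Qed.

Lemma KpowK N (p : vec R N) : Kpow (Kpow p) = p.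
Proof.
apply/ffunP => i; rewrite KpowE.
under eq_bigr do rewrite KpowE mulr_sumr.
rewrite exchange_big /=.
under eq_bigr do (under eq_bigr do rewrite mulrA; rewrite -mulr_suml Kp_invol).
rewrite (bigD1 i) //= eqxx mul1r big1 ?addr0 // => j /negbTE.
by rewrite eq_sym => ->; rewrite mul0r.
Qed.

Lemma KpowL N (p u : vec R N) (x y : R) :
  Kpow [ffun i => x * p i + y * u i] = [ffun i => x * Kpow p i + y * Kpow u i].
Proof.
apply/ffunP => i; rewrite !ffunE !mulr_sumr -big_split /=.
by apply: eq_bigr => j _; rewrite ffunE; ring.
Qed.

Lemma KpowZ N (p : vec R N) (x : R) :
  Kpow [ffun i => x * p i] = [ffun i => x * Kpow p i].
Proof.
apply/ffunP => i; rewrite !ffunE !mulr_sumr.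
by apply: eq_bigr => j _; rewrite ffunE; ring.
Qed.

Lemma Kpow_eq0 N (p : vec R N) : (forall i, p i = 0) -> forall i, Kpow p i = 0.
Proof. by move=> p0 i; rewrite KpowE big1 // => j _; rewrite p0 mulr0. Qed.

Lemma extremal_ray_nonzero N (p q : vec R N) :
  extremal_ray (@S_cone R N) (p, q) -> (exists c, p c != 0) /\ (exists a, q a != 0).
Proof.
case=> [[_ [_ /= e]] [i /= hi] _].
have Kq : Kpow q = p by rewrite -e KpowK.
have nz (u : vec R N) : ~ (forall j, u j = 0) -> exists j, u j != 0.
  move=> u0; apply/existsP; apply: contra_notT u0.
  by rewrite negb_exists => /forallP H j; apply/eqP/negPn/H.
split; apply: nz => u0; case: hi.
- by rewrite u0 eqxx.
- by rewrite -e (Kpow_eq0 u0) eqxx.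
- by rewrite -Kq (Kpow_eq0 u0) eqxx.
- by rewrite u0 eqxx.
Qed.

(* Summands of (p, q) in the cone have this
   property, and it is exactly what lets (p, q) absorb perturbations by u. *)
Definition dominated N (p q u : vec R N) : Prop :=
  (forall c, p c = 0 -> u c = 0) /\ (forall a, q a = 0 -> Kpow u a = 0).

Lemma scale_below (T : finType) (f g : T -> R) :
  (forall i, 0 <= g i) -> (forall i, g i = 0 -> f i = 0) ->
  exists2 t, 0 < t & forall i, t * `|f i| <= g i.
Proof.
move=> g_ge0 fg0; set C := \sum_i `|f i| / g i.
have C_ge0 : 0 <= C by rewrite sumr_ge0 // => i _; rewrite divr_ge0.
exists (C + 1)^-1; first by rewrite invr_gt0; lra.
move=> i; have [gi0|gi_neq0] := eqVneq (g i) 0.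
  by rewrite gi0 fg0 // normr0 mulr0.
have gi_gt0 : 0 < g i by rewrite lt0r gi_neq0 g_ge0.
have : `|f i| / g i <= C.
  by rewrite /C (bigD1 i) //= lerDl sumr_ge0 // => j _; rewrite divr_ge0.
rewrite ler_pdivrMr // ler_pdivrMl; last lra.
by nra.
Qed.

Lemma perturb_nonneg (T : finType) (f g : T -> R) (t s : R) :
  (forall i, t * `|f i| <= g i) -> `|s| <= t -> forall i, 0 <= g i + s * f i.
Proof.
move=> fg st i; have : `|s * f i| <= g i.
  by rewrite normrM; apply: le_trans (fg i); rewrite ler_wpM2r.
by rewrite ler_norml => /andP[h _]; lra.
Qed.

Lemma extremal_face N (p q u : vec R N) :
  extremal_ray (@S_cone R N) (p, q) -> dominated p q u ->
  exists a, forall c, u c = a * p c.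
Proof.
case=> [[/= p_ge0 [/= q_ge0 e]] _ ext] [up uq].
have [t1 t1_gt0 bnd1] := scale_below p_ge0 up.
have [t2 t2_gt0 bnd2] := scale_below q_ge0 uq.
set m := Num.min t1 t2.
have m_gt0 : 0 < m by rewrite lt_min t1_gt0.
have [m_t1 m_t2] : m <= t1 /\ m <= t2 by apply/andP; rewrite -le_min.
pose pt s := ([ffun i => 2^-1 * p i + 2^-1 * s * u i],
              [ffun i => 2^-1 * q i + 2^-1 * s * Kpow u i]).
have pt_cone s : `|s| <= m -> S_cone (pt s).
  move=> sm; split; [|split]; rewrite /= ?KpowL ?e // => i;
    rewrite ffunE -mulrA -mulrDr mulr_ge0 ?invr_ge0 ?ler0n //.
    by apply: perturb_nonneg bnd1 _ _; apply: le_trans m_t1.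
  by apply: perturb_nonneg bnd2 _ _; apply: le_trans m_t2.
have [|||a Ha] := ext (pt m) (pt (- m)).
- by apply: pt_cone; rewrite gtr0_norm.
- by apply: pt_cone; rewrite normrN gtr0_norm.
- by move=> i /=; rewrite !ffunE; split; field.
exists ((2 * a - 1) / m) => c; have [/= + _] := Ha c; rewrite ffunE => h.
have m_neq0 : m != 0 by rewrite gt_eqF.
apply: (mulfI m_neq0); have -> : m * u c = 2 * (2^-1 * m * u c) by field.
by rewrite (_ : 2^-1 * m * u c = a * p c - 2^-1 * p c); [field | rewrite -h; ring].
Qed.

Section TensorIndex.
Variables N1 N2 : nat.

Definition lft (i : idx (N1 + N2)) : idx N1 := [ffun k => i (lshift N2 k)].
Definition rgt (i : idx (N1 + N2)) : idx N2 := [ffun k => i (rshift N1 k)].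
Definition join (c : idx N1) (d : idx N2) : idx (N1 + N2) :=
  [ffun k => match split k with inl a => c a | inr b => d b end].

Lemma lft_join c d : lft (join c d) = c.
Proof. by apply/ffunP => k; rewrite !ffunE (unsplitK (inl k)). Qed.

Lemma rgt_join c d : rgt (join c d) = d.
Proof. by apply/ffunP => k; rewrite !ffunE (unsplitK (inr k)). Qed.

Lemma join_lr i : join (lft i) (rgt i) = i.
Proof. by apply/ffunP => k; rewrite !ffunE; case: split_ordP => j ->; rewrite ffunE. Qed.

Lemma vec_join_eq (Y Z : vec R (N1 + N2)) :
  (forall c d, Y (join c d) = Z (join c d)) -> Y = Z.
Proof. by move=> YZ; apply/ffunP => i; rewrite -[i]join_lr YZ. Qed.

Lemma sum_join (F : idx (N1 + N2) -> R) : \sum_i F i = \sum_c \sum_d F (join c d).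
Proof.
rewrite pair_bigA /= (reindex (fun cd : idx N1 * idx N2 => join cd.1 cd.2)) //.
exists (fun i => (lft i, rgt i)) => [[c d] _|i _] /=.
  by rewrite lft_join rgt_join.
by rewrite join_lr.
Qed.

Lemma tens_join (p1 : vec R N1) (p2 : vec R N2) c d :
  tens p1 p2 (join c d) = p1 c * p2 d.
Proof. by rewrite ffunE -/(lft _) -/(rgt _) lft_join rgt_join. Qed.

Lemma Kp_join a b c d : Kp (join a b) (join c d) = Kp a c * Kp b d.
Proof.
rewrite /Kp big_split_ord /=; congr (_ * _); apply: eq_bigr => k _.
  by rewrite !ffunE (unsplitK (inl k)).
by rewrite !ffunE (unsplitK (inr k)).
Qed.

Lemma Kpow_join (Y : vec R (N1 + N2)) a b :
  Kpow Y (join a b) = \sum_c \sum_d Kp a c * Kp b d * Y (join c d).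
Proof.
by rewrite KpowE sum_join; apply: eq_bigr => c _; apply: eq_bigr => d _; rewrite Kp_join.
Qed.

Definition slice (Y : vec R (N1 + N2)) (d : idx N2) : vec R N1 :=
  [ffun c => Y (join c d)].

Lemma Kpow_slice (Y : vec R (N1 + N2)) a b :
  Kpow Y (join a b) = Kpow [ffun d => Kpow (slice Y d) a] b.
Proof.
rewrite Kpow_join KpowE exchange_big /=; apply: eq_bigr => d _.
rewrite ffunE KpowE mulr_sumr; apply: eq_bigr => c _; rewrite ffunE; ring.
Qed.

Lemma Kpow_tens (g : vec R N1) (f : vec R N2) :
  Kpow (tens g f) = tens (Kpow g) (Kpow f).
Proof.
apply: vec_join_eq => a b; rewrite Kpow_join tens_join !KpowE mulr_suml.
apply: eq_bigr => c _; rewrite mulr_sumr; apply: eq_bigr => d _.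
by rewrite tens_join; ring.
Qed.

End TensorIndex.

Lemma cone_summand_dominated N (x y z : vec R N * vec R N) :
  S_cone y -> S_cone z ->
  (forall i, x.1 i = y.1 i + z.1 i /\ x.2 i = y.2 i + z.2 i) ->
  dominated x.1 x.2 y.1.
Proof.
case=> y1_ge0 [y2_ge0 ey] [z1_ge0 [z2_ge0 _]] xyz.
split=> i xi; have [s1 s2] := xyz i; rewrite ?ey;
  move: (y1_ge0 i) (z1_ge0 i) (y2_ge0 i) (z2_ge0 i); lra.
Qed.

Lemma tens_S_cone N1 N2 (p1 q1 : vec R N1) (p2 q2 : vec R N2) :
  S_cone (p1, q1) -> S_cone (p2, q2) -> S_cone (tens p1 p2, tens q1 q2).
Proof.
case=> /= p1_ge0 [q1_ge0 e1] [/= p2_ge0 [q2_ge0 e2]].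
by split; [|split] => /= [i|i|]; rewrite ?Kpow_tens ?e1 ?e2 // ffunE mulr_ge0.
Qed.

(* Its slices are multiples
   of p1, so it is p1 (x) v, and v is in turn dominated by (p2, q2). *)
Lemma tens_face N1 N2 (p1 q1 : vec R N1) (p2 q2 : vec R N2) (Y : vec R (N1 + N2)) :
  extremal_ray (@S_cone R N1) (p1, q1) -> extremal_ray (@S_cone R N2) (p2, q2) ->
  dominated (tens p1 p2) (tens q1 q2) Y -> exists b, forall i, Y i = b * tens p1 p2 i.
Proof.
move=> E1 E2 [Yp Yq].
have [[c0 p1c0] [a0 q1a0]] := extremal_ray_nonzero E1.
have [[_ [_ e1]] _ _] := E1.
have slice_dom d : dominated p1 q1 (slice Y d).
  split=> [c p1c|a q1a]; first by rewrite ffunE Yp // tens_join p1c mul0r.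
  pose w := [ffun d' => Kpow (slice Y d') a].
  have Kw0 b : Kpow w b = 0 by rewrite -Kpow_slice Yq // tens_join q1a mul0r.
  by have := Kpow_eq0 Kw0 d; rewrite KpowK ffunE.
pose v := [ffun d => Y (join c0 d) / p1 c0].
have Y_tens : Y = tens p1 v.
  apply: vec_join_eq => c d; have [a Ha] := extremal_face E1 (slice_dom d).
  have := Ha c0; have := Ha c; rewrite tens_join !ffunE => -> ->.
  by rewrite mulfK // mulrC.
have v_dom : dominated p2 q2 v.
  split=> [d p2d|b q2b]; first by rewrite ffunE Yp ?mul0r // tens_join p2d mulr0.
  have : Kpow Y (join a0 b) = 0 by rewrite Yq // tens_join q2b mulr0.
  rewrite {1}Y_tens Kpow_tens tens_join /= e1 => /eqP.
  by rewrite mulf_eq0 (negbTE q1a0) => /eqP.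
have [b Hb] := extremal_face E2 v_dom.
by exists b => i; rewrite Y_tens -[i]join_lr !tens_join Hb; ring.
Qed.

End PauliCone.

Theorem mainTheorem7 (R : realFieldType) (N1 N2 : nat)
  (p1 q1 : vec R N1) (p2 q2 : vec R N2) :
  extremal_ray (@S_cone R N1) (p1, q1) ->
  extremal_ray (@S_cone R N2) (p2, q2) ->
  S_cone (tens p1 p2, tens q1 q2) /\
  extremal_ray (@S_cone R (N1 + N2)) (tens p1 p2, tens q1 q2).
Proof.
move=> E1 E2; have [C1 _ _] := E1; have [C2 _ _] := E2.
have Cx := tens_S_cone C1 C2; have [_ [_ /= Kx]] := Cx.
split=> //; split=> //.
  have [[c p1c] _] := extremal_ray_nonzero E1.
  have [[d p2d] _] := extremal_ray_nonzero E2.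
  by exists (join c d); left; rewrite /= tens_join mulf_neq0.
move=> y z Cy Cz xyz; have [_ [_ ey]] := Cy.
have [b Hb] := tens_face E1 E2 (cone_summand_dominated Cy Cz xyz).
have y1E : y.1 = [ffun i => b * tens p1 p2 i] by apply/ffunP => i; rewrite ffunE Hb.
by exists b => i; split; rewrite // -ey y1E KpowZ Kx ffunE.
Qed.
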